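(* Let $\alpha,p,j\ge0$ be integers, and let $b_n=2n+\alpha+1$, $\lambda_n=n(n+\alpha)$. Then $$\sum_{\omega\in\mathrm{Mot}_{p,j,j}}\mathrm{wt}_{b,\lambda}(\omega)=\big|M^{(\alpha)}_{p,j}(p)\big|.$$
   Context: Motzkin paths: a Motzkin path is a sequence $(s_0,\dots,s_n)$ of points $s_i=(x_i,y_i)\in\mathbb{Z}^2$ with all $y_i\ge0$ such that each step $(s_i,s_{i+1})$ is an East step ($s_{i+1}=s_i+(1,0)$), a North-East step ($s_{i+1}=s_i+(1,1)$) or a South-East step ($s_{i+1}=s_i+(1,-1)$); the step has height $k$ if $y_i=k$. $\mathrm{Mot}_{n,k,l}$ is the set of Motzkin paths from $(0,k)$ to $(n,l)$. Given sequences $(b_n)_{n\ge0},(\lambda_n)_{n\ge0}$, an East step of height $k$ has weight $b_k$, a North-East step weight $1$, a South-East step of height $k$ weight $\lambda_k$, and $\mathrm{wt}_{b,\lambda}(\omega)$ is the product of the step weights of $\omega$. Bipartite matchings: for integers $n,j,\alpha\ge0$, let $T_-=\{-\alpha-j,\dots,-1\}$, $T_+=\{1,\dots,n\}$ (top row), $B_-=\{-\tilde j,\dots,-\tilde 1\}$, $B_+=\{\tilde1,\dots,\tilde n\}$ (bottom row; $\tilde m$ is a formal copy of $m$). A bipartite matching on $T_-\cup T_+\cup B_-\cup B_+$ is a set partition into singletons (isolated vertices) and two-element blocks $\{a,\tilde b\}$ with $a$ in the top row and $\tilde b$ in the bottom row (edges). $M^{(\alpha)}_{n,j}$ is the set of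 such matchings having no edge $\{a,\tilde b\}$ with $a\in T_-$ and $\tilde b\in B_-$, and $M^{(\alpha)}_{n,j}(l)$ is its subset of matchings with exactly $l$ edges. *)

From mathcomp Require Import all_boot.
Set Implicit Arguments. Unset Strict Implicit. Unset Printing Implicit Defensive.

(* A Motzkin path (s_0,...,s_n) from (0,k) is encoded by its sequence of
   n steps: 0 = East (1,0), 1 = North-East (1,1), 2 = South-East (1,-1). *)
Definition East : 'I_3 := @Ordinal 3 0 isT.
Definition NorthEast : 'I_3 := @Ordinal 3 1 isT.
Definition SouthEast : 'I_3 := @Ordinal 3 2 isT.

(* Height after a step taken at height k (only used when the step is valid). *)
Definition step_next (st : 'I_3) (k : nat) : nat :=
  if st == East then k else if st == NorthEast then k.+1 else k.-1.

Fixpoint mot_valid (k l : nat) (s : seq 'I_3) : bool :=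
  match s with
  | [::] => k == l
  | st :: s' =>
      (if st == SouthEast then 0 < k else true) && mot_valid (step_next st k) l s'
  end.

Definition Mot (n k l : nat) : {set n.-tuple 'I_3} :=
  [set w : n.-tuple 'I_3 | mot_valid k l w].

Fixpoint mot_wt (b lam : nat -> nat) (k : nat) (s : seq 'I_3) : nat :=
  match s with
  | [::] => 1
  | st :: s' =>
      (if st == East then b k else if st == NorthEast then 1 else lam k)
      * mot_wt b lam (step_next st k) s'
  end.

(* Top row T = T_- + T_+ with |T_-| = alpha + j, |T_+| = n;
   bottom row B = B_- + B_+ with |B_-| = j, |B_+| = n.
   (inl i : 'I_(alpha+j)) stands for the label -(i+1), (inr i : 'I_n) for i+1. *)
Definition topV (alpha j n : nat) := ('I_(alpha + j) + 'I_n)%type.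
Definition botV (j n : nat) := ('I_j + 'I_n)%type.

Definition is_neg (A B : Type) (x : A + B) : bool :=
  if x is inl _ then true else false.

(* A bipartite matching is determined by its set of edges {a, b~}; the other
   vertices are singletons. Edges must be pairwise vertex-disjoint. *)
Definition is_matching (alpha j n : nat) (M : {set topV alpha j n * botV j n}) : bool :=
  [forall e in M, forall e' in M,
      ((e.1 == e'.1) || (e.2 == e'.2)) ==> (e == e')].

Definition in_Malpha (alpha j n : nat) (M : {set topV alpha j n * botV j n}) : bool :=
  is_matching M && [forall e in M, ~~ (is_neg e.1 && is_neg e.2)].

Definition Malpha (alpha n j l : nat) : {set {set topV alpha j n * botV j n}} :=
  [set M | in_Malpha M && (#|M| == l)].

From mathcomp Require Import all_boot zify ring.
Set Implicit Arguments. Unset Strict Implicit. Unset Printing Implicit Defensive.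

(* Both sides satisfy the same recurrence in the length.  Let N_q(m) be the
   number of matchings with m edges using only the negative vertices and the
   positive vertices 1..q of both rows.  Adding the top vertex q+1 and then the
   bottom vertex q+1, each compatible with every vertex of the other row, gives
   N_{q+1}(m+1) = N_q(m+1) + (2l+alpha+1) N_q(m) + (l+1)(l+1+alpha) N_q(m-1) with
   l = j+q-m, which is the last-step decomposition of weighted Motzkin paths
   of length q+1 from height j to height l.  Perfect matchings (m = p) then
   correspond to paths ending at height j. *)

Lemma big_tuple_cons (T : finType) n (F : n.+1.-tuple T -> nat) :
  \sum_(w : n.+1.-tuple T) F w =
  \sum_(x : T) \sum_(t : n.-tuple T) F [tuple of x :: t].
Proof.
rewrite pair_big (reindex (fun p : T * n.-tuple T => [tuple of p.1 :: p.2])) //=.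
exists (fun w : n.+1.-tuple T => (thead w, [tuple of behead w])).
  by move=> [x t] _ /=; congr (_, _); apply: val_inj.
by move=> w _; rewrite [RHS]tuple_eta.
Qed.

Section MotzkinSums.

Variables b lam : nat -> nat.

Fixpoint motzkin_sum (q k l : nat) : nat :=
  match q with
  | 0 => k == l
  | q'.+1 => motzkin_sum q' k.+1 l + b k * motzkin_sum q' k l
             + (if k is k'.+1 then lam k * motzkin_sum q' k' l else 0)
  end.

Lemma motzkin_sumSl q k l :
  motzkin_sum q.+1 k l = motzkin_sum q k.+1 l + b k * motzkin_sum q k l
    + (if k is k'.+1 then lam k * motzkin_sum q k' l else 0).
Proof. by []. Qed.

Lemma motzkin_sumSr q k l :
  motzkin_sum q.+1 k l = (if l is l'.+1 then motzkin_sum q k l' else 0)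
    + b l * motzkin_sum q k l + lam l.+1 * motzkin_sum q k l.+1.
Proof.
elim: q k l => [|q IHq] k l.
  case: k => [|k]; case: l => [|l] /=; rewrite ?eqSS;
  repeat (case: eqP => ?); subst; try lia; ring.
case: k => [|k]; rewrite motzkin_sumSl ![in LHS]IHq;
  by case: l => [|l]; rewrite ?motzkin_sumSl; ring.
Qed.

Lemma motzkin_sum_eq0 q k l : k + q < l -> motzkin_sum q k l = 0.
Proof.
elim: q k => [|q IHq] k lt_l /=.
  by case: eqP lt_l => // ->; rewrite addn0 ltnn.
by case: k lt_l => [|k] lt_l; rewrite !IHq //; lia.
Qed.

Lemma sum_mot_wt q k l :
  \sum_(w in Mot q k l) mot_wt b lam k w = motzkin_sum q k l.
Proof.
elim: q k => [|q IHq] k.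
  rewrite (eq_bigr (fun _ => 1)) => [|w _]; last by rewrite tuple0.
  rewrite sum1_card (eq_card (B := [pred _ | k == l])) => [|w]; last first.
    by rewrite inE tuple0.
  rewrite /=; case: eqP => _; by rewrite ?card0 // eq_cardT // -cardT card_tuple.
have sum_tail c k' : \sum_(t : q.-tuple 'I_3)
    (if mot_valid k' l t then c * mot_wt b lam k' t else 0) = c * motzkin_sum q k' l.
  rewrite -IHq big_distrr [RHS]big_mkcond /=.
  by apply: eq_bigr => t _; rewrite inE; case: ifP.
rewrite big_mkcond big_tuple_cons.
under eq_bigr => c _ do under eq_bigr => t _ do rewrite inE.
rewrite !big_ord_recl big_ord0.
by case: k => [|k]; rewrite /= !sum_tail ?big1 // /step_next /=; lia.
Qed.

End MotzkinSums.

Section InjectiveOnSets.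

Variables (aT rT : finType) (f : aT -> rT) (A : {set aT}).
Hypothesis injf : {in A &, injective f}.

Lemma in_inj_setU1 a : f a \notin f @: A -> {in a |: A &, injective f}.
Proof.
move=> faA x y; rewrite !inE => /predU1P[-> | xA] /predU1P[-> | yA] // fxy.
- by rewrite fxy (imset_f _ yA) in faA.
- by rewrite -fxy (imset_f _ xA) in faA.
- exact: injf.
Qed.

Lemma notin_imset_setD1 a : a \in A -> f a \notin f @: (A :\ a).
Proof.
move=> aA; apply/imsetP => -[x]; rewrite !inE => /andP[xa xA] fax.
by rewrite (injf aA xA fax) eqxx in xa.
Qed.

End InjectiveOnSets.

Lemma in_inj_imset (aT rT cT : finType) (f : aT -> rT) (g : rT -> cT)
    (A : {set aT}) :
  injective f -> {in f @: A &, injective g} <-> {in A &, injective (g \o f)}.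
Proof.
move=> injf; split=> [injg x y xA yA | injgf _ _ /imsetP[x xA ->] /imsetP[y yA ->]].
  by move=> /(injg _ _ (imset_f f xA) (imset_f f yA)) /injf.
by move=> /(injgf x y xA yA) ->.
Qed.

Lemma card_dep_pairs (A C : finType) (X : {set A}) (Y : A -> {set C}) :
  #|[set pr : A * C | (pr.1 \in X) && (pr.2 \in Y pr.1)]| = \sum_(a in X) #|Y a|.
Proof.
rewrite -sum1_card (eq_bigr (fun a => \sum_(c in Y a) 1)) => [|a _]; last first.
  by rewrite sum1_card.
by rewrite pair_big_dep; apply: eq_bigl => pr; rewrite inE.
Qed.

Section BipartiteMatchings.

Variables (T B : finType) (P : T -> B -> bool).
Implicit Types (M : {set T * B}) (St : {set T}) (Sb : {set B}).

Definition matchingb M :=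
  [forall e in M, forall e' in M, ((e.1 == e'.1) || (e.2 == e'.2)) ==> (e == e')].

Definition edges_within St Sb M :=
  [forall e in M, [&& P e.1 e.2, e.1 \in St & e.2 \in Sb]].

Definition matchings St Sb m :=
  [set M | [&& matchingb M, edges_within St Sb M & #|M| == m]].

Lemma matchingP M :
  reflect ({in M &, injective fst} /\ {in M &, injective snd}) (matchingb M).
Proof.
apply: (iffP forall_inP) => [H | [inj1 inj2] e eM].
  have eq_edges e e' : e \in M -> e' \in M -> (e.1 == e'.1) || (e.2 == e'.2) -> e = e'.
    by move=> eM /(forall_inP (H e eM)) /implyP eq_ee' /eq_ee' /eqP.
  by split=> e e' eM e'M E; apply: eq_edges; rewrite // E eqxx ?orbT.
apply/forall_inP => e' e'M; apply/implyP => /orP[] /eqP E; apply/eqP.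
  exact: inj1.
exact: inj2.
Qed.

Lemma edges_withinP St Sb M :
  reflect (forall e, e \in M -> [/\ P e.1 e.2, e.1 \in St & e.2 \in Sb])
          (edges_within St Sb M).
Proof. by apply: (iffP forall_inP) => H e /H /and3P. Qed.

Lemma in_matchings St Sb m M :
  (M \in matchings St Sb m) = [&& matchingb M, edges_within St Sb M & #|M| == m].
Proof. by rewrite inE. Qed.

Lemma matchings0 St Sb : matchings St Sb 0 = [set set0].
Proof.
apply/setP => M; rewrite in_matchings inE cards_eq0.
case: eqP => [-> | _]; rewrite ?andbF ?andbT //.
by apply/andP; split; [apply/matchingP; split | apply/edges_withinP] => ?; rewrite inE.
Qed.

Lemma card_matching_snd St Sb M :
  matchingb M -> edges_within St Sb M -> snd @: M \subset Sb /\ #|snd @: M| = #|M|.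
Proof.
move=> /matchingP[_ inj2] /edges_withinP inSb; split; last exact: card_in_imset.
by apply/subsetP => _ /imsetP[e /inSb[_ _ eSb] ->].
Qed.

Lemma matchings_eq0 St Sb m : #|Sb| < m -> matchings St Sb m = set0.
Proof.
move=> ltSm; apply/setP => M; rewrite in_matchings inE.
apply/negbTE/and3P => -[mM inM /eqP cardM].
have [subSb cardSM] := card_matching_snd mM inM.
by rewrite -cardM -cardSM ltnNge subset_leq_card in ltSm.
Qed.

Lemma setU1_edge_inj (t : T) M1 M2 y1 y2 :
  t \notin fst @: M1 -> t \notin fst @: M2 ->
  (t, y1) |: M1 = (t, y2) |: M2 -> (M1, y1) = (M2, y2).
Proof.
have tyM M y : t \notin fst @: M -> (t, y) \notin M.
  by apply: contra => /(imset_f fst).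
move=> tM1 tM2 eqM; have ey : y1 = y2.
  have /setU1P[[] // | y1M2] : (t, y1) \in (t, y2) |: M2 by rewrite -eqM setU11.
  by move: (tyM _ y1 tM2); rewrite y1M2.
subst y2; congr (_, _).
by rewrite -(setU1K (tyM M1 y1 tM1)) eqM setU1K // tyM.
Qed.

Section AddTopVertex.

Variables (St : {set T}) (Sb : {set B}) (t : T).
Hypotheses (tSt : t \notin St) (Pt : {in Sb, forall y, P t y}).

Lemma edges_within_setU1l M :
  edges_within (t |: St) Sb M && (t \notin fst @: M) = edges_within St Sb M.
Proof.
apply/andP/edges_withinP => [[/edges_withinP inM tM] e eM | inM].
  have [Pe /setU1P[e1t | //] e2] := inM e eM.
  by rewrite -e1t (imset_f _ eM) in tM.
split; first by apply/edges_withinP => e /inM[-> e1 ->]; rewrite inE e1 orbT.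
by apply/imsetP => -[e /inM[_ + _] te]; rewrite -te (negbTE tSt).
Qed.

Lemma matchings_setU1l_extend m M y :
  M \in matchings St Sb m -> y \in Sb :\: snd @: M ->
  (t, y) |: M \in matchings (t |: St) Sb m.+1.
Proof.
rewrite !in_matchings => /and3P[mM inM /eqP <-]; rewrite inE => /andP[yM ySb].
have /andP[inM' tM] := etrans (edges_within_setU1l M) inM.
move/matchingP: mM => [inj1 inj2]; apply/and3P; split.
- by apply/matchingP; split; apply: in_inj_setU1.
- apply/edges_withinP => e /setU1P[-> | eM]; last first.
    by move/edges_withinP: inM' => /(_ e eM).
  by rewrite /= Pt // setU11.
- have tyM : (t, y) \notin M by apply: contra tM => /(imset_f fst).
  by rewrite cardsU1 tyM.
Qed.

Lemma matchings_setU1l_restrict m M y :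
  M \in matchings (t |: St) Sb m.+1 -> (t, y) \in M ->
  M :\ (t, y) \in matchings St Sb m /\ y \in Sb :\: snd @: (M :\ (t, y)).
Proof.
rewrite !in_matchings => /and3P[mM inM /eqP cardM] tyM.
move/matchingP: (mM) => [inj1 inj2].
have [_ _ ySb] := edges_withinP _ _ _ inM _ tyM.
split; last by rewrite inE ySb (notin_imset_setD1 inj2 tyM).
apply/and3P; split.
- apply/matchingP; split=> e e' /setD1P[_ eM] /setD1P[_ e'M].
    exact: inj1.
  exact: inj2.
- rewrite -edges_within_setU1l; apply/andP; split.
    by apply/edges_withinP => e /setD1P[_ /(edges_withinP _ _ _ inM)].
  exact: (notin_imset_setD1 inj1 tyM).
- by move: cardM; rewrite (cardsD1 (t, y)) tyM add1n => -[->].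
Qed.

Lemma card_matchings_setU1l m :
  #|matchings (t |: St) Sb m.+1| =
  #|matchings St Sb m.+1| + (#|Sb| - m) * #|matchings St Sb m|.
Proof.
set A := matchings (t |: St) Sb m.+1.
set matched := [set M : {set T * B} | t \in fst @: M].
have t_unmatched n M : M \in matchings St Sb n -> t \notin fst @: M.
  by rewrite in_matchings -edges_within_setU1l => /and3P[_ /andP[]].
rewrite -(cardsID matched A) addnC; congr (_ + _).
  apply: eq_card => M; rewrite !inE -edges_within_setU1l.
  by case: (t \in fst @: M); rewrite ?andbF ?andbT.
pose D := [set pr : {set T * B} * B |
             (pr.1 \in matchings St Sb m) && (pr.2 \in Sb :\: snd @: pr.1)].
have -> : A :&: matched = (fun pr => (t, pr.2) |: pr.1) @: D.
  apply/setP => M; rewrite !inE -in_matchings; apply/andP/imsetP.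
    case=> MA /imsetP[[t' y] tyM /= tt']; subst t'; exists (M :\ (t, y), y).
      by rewrite inE; apply/andP; apply: matchings_setU1l_restrict.
    by rewrite /= setD1K.
  case=> -[M' y]; rewrite inE => /andP[M'm yM'] ->.
  split; first exact: matchings_setU1l_extend.
  by apply/imsetP; exists (t, y); rewrite ?setU11.
rewrite card_in_imset => [|[M1 y1] [M2 y2]]; last first.
  rewrite !inE -!in_matchings => /andP[/t_unmatched tM1 _] /andP[/t_unmatched tM2 _].
  exact: setU1_edge_inj.
rewrite (card_dep_pairs _ (fun M => Sb :\: snd @: M)) mulnC -sum_nat_const.
apply: eq_bigr => M; rewrite in_matchings => /and3P[mM inM /eqP cardM].
by have [subSb cardS] := card_matching_snd mM inM; rewrite cardsDS // cardS cardM.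
Qed.

End AddTopVertex.

End BipartiteMatchings.

Definition swap_edges (T B : finType) (M : {set T * B}) : {set B * T} :=
  swap_pair @: M.

Lemma swap_edgesK (T B : finType) : cancel (@swap_edges T B) (@swap_edges B T).
Proof.
by move=> M; rewrite /swap_edges -imset_comp (eq_imset _ swap_pairK) imset_id.
Qed.

Section SwapSides.

Variables (T B : finType) (P : T -> B -> bool).
Implicit Types (M : {set T * B}) (St : {set T}) (Sb : {set B}).

Let swap_inj := can_inj (@swap_pairK T B).

Lemma matchingb_swap M : matchingb (swap_edges M) = matchingb M.
Proof.
rewrite /swap_edges; apply/matchingP/matchingP => -[inj1 inj2]; split.
- exact: (in_inj_imset _ _ swap_inj).1 inj2.
- exact: (in_inj_imset _ _ swap_inj).1 inj1.
- exact: (in_inj_imset _ _ swap_inj).2 inj2.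
- exact: (in_inj_imset _ _ swap_inj).2 inj1.
Qed.

Lemma edges_within_swap St Sb M :
  edges_within (fun y x => P x y) Sb St (swap_edges M) = edges_within P St Sb M.
Proof.
apply/edges_withinP/edges_withinP => inM e.
  by move=> /(imset_f swap_pair) /inM[].
by case/imsetP => x /inM[] *; subst.
Qed.

Lemma card_matchings_swap St Sb m :
  #|matchings (fun y x => P x y) Sb St m| = #|matchings P St Sb m|.
Proof.
rewrite -[RHS](card_imset _ (can_inj (@swap_edgesK T B))).
rewrite (can2_imset_pre _ (@swap_edgesK T B) (@swap_edgesK B T)).
apply: eq_card => M; rewrite in_matchings inE -[M in LHS](swap_edgesK M).
rewrite matchingb_swap edges_within_swap.
by rewrite [#|swap_edges (swap_edges M)|]card_imset ?in_matchings.
Qed.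

End SwapSides.

Lemma card_matchings_setU1r (T B : finType) (P : T -> B -> bool)
    (St : {set T}) (Sb : {set B}) (y : B) m :
  y \notin Sb -> {in St, forall x, P x y} ->
  #|matchings P St (y |: Sb) m.+1| =
  #|matchings P St Sb m.+1| + (#|St| - m) * #|matchings P St Sb m|.
Proof. by move=> ySb Py; rewrite -!(card_matchings_swap P) card_matchings_setU1l. Qed.

Definition segment (A : finType) (p q : nat) : {set A + 'I_p} :=
  [set x : A + 'I_p | if x is inr i then i < q else true].

Lemma segmentS (A : finType) p q (lt_qp : q < p) :
  segment A p q.+1 = inr (Ordinal lt_qp) |: segment A p q.
Proof.
apply/setP => -[x | i]; rewrite !inE //=.
by rewrite -[inr i == _]/(i == Ordinal lt_qp) -val_eqE /= ltnS leq_eqVlt.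
Qed.

Lemma inr_notin_segment (A : finType) p q (lt_qp : q < p) :
  inr (Ordinal lt_qp) \notin segment A p q.
Proof. by rewrite inE /= ltnn. Qed.

Lemma card_segment (A : finType) p q : q <= p -> #|segment A p q| = #|A| + q.
Proof.
elim: q => [|q IHq] le_qp.
  have -> : segment A p 0 = inl @: [set: A].
    apply/setP => -[x | i]; rewrite !inE /=; apply/esym/imsetP.
      by exists x; rewrite ?inE.
    by case.
  by rewrite card_imset ?cardsT ?addn0 //; apply: inl_inj.
by rewrite (segmentS A le_qp) cardsU1 inr_notin_segment IHq ?addnS // ltnW.
Qed.

Lemma segment_full (A : finType) p : segment A p p = setT.
Proof. by apply/setP => -[x | i]; rewrite !inE /= ?ltn_ord. Qed.

Definition not_both_neg (A1 A2 C1 C2 : Type) (x : A1 + A2) (y : C1 + C2) :=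
  ~~ (is_neg x && is_neg y).

Section SegmentMatchings.

Variables alpha j p : nat.

Local Notation mot :=
  (motzkin_sum (fun n => 2 * n + alpha + 1) (fun n => n * (n + alpha))).

Definition seg_matchings q1 q2 m :=
  matchings (@not_both_neg _ _ _ _)
    (segment 'I_(alpha + j) p q1) (segment 'I_j p q2) m.

Lemma card_seg_matchings0 q1 q2 : #|seg_matchings q1 q2 0| = 1.
Proof. by rewrite /seg_matchings matchings0 cards1. Qed.

Lemma seg_matchings_negative m : seg_matchings 0 0 m.+1 = set0.
Proof.
apply/setP => M; rewrite in_matchings inE.
apply/negbTE/and3P => -[_ /edges_withinP inM /eqP cardM].
have [e eM] : exists e, e \in M by apply/set0Pn; rewrite -card_gt0 cardM.
by have [] := inM e eM; case: e eM => -[x | x] [y | y]; rewrite !inE.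
Qed.

Lemma seg_matchings_eq0 q m : q <= p -> j + q < m -> seg_matchings q q m = set0.
Proof.
by move=> le_qp lt_m; rewrite /seg_matchings matchings_eq0 // card_segment // card_ord.
Qed.

Lemma card_seg_matchings_top q m : q < p ->
  #|seg_matchings q.+1 q m| = #|seg_matchings q q m|
    + (if m is m'.+1 then (j + q - m') * #|seg_matchings q q m'| else 0).
Proof.
move=> lt_qp; case: m => [|m]; first by rewrite !card_seg_matchings0.
rewrite /seg_matchings (segmentS _ lt_qp) card_matchings_setU1l ?inr_notin_segment //.
by rewrite card_segment ?card_ord // ltnW.
Qed.

Lemma card_seg_matchings_bot q m : q < p ->
  #|seg_matchings q.+1 q.+1 m.+1| = #|seg_matchings q.+1 q m.+1|
    + (alpha + j + q.+1 - m) * #|seg_matchings q.+1 q m|.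
Proof.
move=> lt_qp; rewrite /seg_matchings [segment 'I_j p q.+1](segmentS _ lt_qp).
rewrite card_matchings_setU1r ?inr_notin_segment ?card_segment ?card_ord //.
by move=> x _; rewrite /not_both_neg andbF.
Qed.

Lemma card_seg_matchings q m l : q <= p -> m + l = j + q ->
  #|seg_matchings q q m| = mot q j l.
Proof.
elim: q m l => [|q IHq] m l le_qp mlE.
  case: m mlE => [|m] mlE /=;
    by rewrite ?card_seg_matchings0 ?seg_matchings_negative ?cards0; case: eqP; lia.
move/(_ _ _ (ltnW le_qp)): IHq => IHq; rewrite motzkin_sumSr /=.
case: m mlE => [|m] mlE.
  have -> : l = (j + q).+1 by lia.
  by rewrite -(IHq 0 (j + q)) // !card_seg_matchings0 !motzkin_sum_eq0; lia.
rewrite card_seg_matchings_bot // !card_seg_matchings_top //.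
have below : #|seg_matchings q q m.+1| = if l is l'.+1 then mot q j l' else 0.
  by case: l mlE => [|l] mlE; [rewrite seg_matchings_eq0 ?cards0 | apply: IHq]; lia.
rewrite {}below.
have above : (if m is m'.+1 then (j + q - m') * #|seg_matchings q q m'| else 0)
             = l.+1 * mot q j l.+1.
  case: m mlE => [|m] mlE; first by rewrite motzkin_sum_eq0 ?muln0 //; lia.
  by rewrite (IHq m l.+1); [congr (_ * _) | ]; lia.
rewrite {}above (IHq m l); last by lia.
have -> : j + q - m = l by lia.
have -> : alpha + j + q.+1 - m = l.+1 + alpha by lia.
ring.
Qed.

Lemma Malpha_seg_matchings : Malpha alpha p j p = seg_matchings p p p.
Proof.
apply/setP => M; rewrite !inE /in_Malpha -andbA; congr (_ && (_ && _)).
rewrite !segment_full.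
by apply/forall_inP/edges_withinP => inM e /inM; [rewrite !in_setT | case].
Qed.

End SegmentMatchings.

Theorem lemma2p2 (alpha p j : nat) :
  \sum_(w in Mot p j j)
     mot_wt (fun n => 2 * n + alpha + 1) (fun n => n * (n + alpha)) j w
  = #|Malpha alpha p j p|.
Proof.
rewrite sum_mot_wt Malpha_seg_matchings.
by rewrite (@card_seg_matchings alpha j p p p j) // addnC.
Qed.
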